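(* Fix $q\in(2,4]$ and $\vartheta>0$. Any arclength parametrized (hence length one) injective regular closed curve $\Gamma\in W^{2,2}(\mathbb{R}/\mathbb{Z},\mathbb{R}^3)$ which is a critical point of $S_\vartheta$ satisfies $$DE_\vartheta(\Gamma)+\lambda\,D\mathscr{L}(\Gamma)=0$$ with Lagrange multiplier $\lambda:=E_\vartheta(\Gamma)$. Moreover, any arclength parametrized curve $\Gamma$ which is critical for the problem of minimizing $E_\vartheta$ on $\mathscr{C}(\mathcal{K})$ (for a knot class $\mathcal{K}$) satisfies the same equation with the same $\lambda=E_\vartheta(\Gamma)$.
   Context: $\mathscr{L}$ is length; $E(\gamma)=\int_\gamma\kappa^2ds$; $\mathrm{TP}_q(\gamma)=\iint_{(\mathbb{R}/\mathbb{Z})^2} r_{tp}(\gamma(s),\gamma(t))^{-q}|\gamma'(s)||\gamma'(t)|\,ds\,dt$ with $r_{tp}(\gamma(s),\gamma(t))$ the radius of the circle through $\gamma(s),\gamma(t)$ tangent to $\gamma$ at $\gamma(s)$; $E_\vartheta=E+\vartheta\mathrm{TP}_q^{1/(q-2)}$, $S_\vartheta=\mathscr{L}\cdot E_\vartheta$; these are continuously differentiable on the open subset of $W^{2,2}(\mathbb{R}/\mathbb{Z},\mathbb{R}^3)$ of injective regular closed curves, with Fréchet derivatives $D$ acting on $h\in W^{2,2}(\mathbb{R}/\mathbb{Z},\mathbb{R}^3)$. $\mathscr{C}(\mathcal{K})=\{\gamma\in W^{2,2}(\mathbb{R}/\mathbb{Z},\mathbb{R}^3):\mathscr{L}(\gamma)=1,|\gamma'|>0,\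 \gamma\text{ embedded of knot type }\mathcal{K}\}$; critical for the constrained problem means $DE_\vartheta(\Gamma)+\mu D\mathscr{L}(\Gamma)=0$ for some $\mu\in\mathbb{R}$. *)

From HB Require Import structures.
From mathcomp Require Import all_boot all_order all_algebra.
From mathcomp Require Import all_classical all_reals all_analysis.
Set Implicit Arguments. Unset Strict Implicit. Unset Printing Implicit Defensive.
Import Order.TTheory GRing.Theory Num.Theory.
Import numFieldNormedType.Exports.
Local Open Scope classical_set_scope.
Local Open Scope ring_scope.

Section Defs.
Variable R : realType.

Definition vec := 'rV[R]_3.
Definition dot (u v : vec) : R := \sum_(i < 3) u ord0 i * v ord0 i.
Definition enorm (u : vec) : R := Num.sqrt (dot u u).

(* curves are 1-periodic maps R -> R^3 (i.e. maps R/Z -> R^3) *)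
Definition curve := R -> vec.
Definition periodic1 {T} (g : R -> T) := forall x, g (x + 1) = g x.

Definition d1 (g : curve) : curve := derive1 g.
Definition d2 (g : curve) : curve := derive1 (d1 g).

Local Notation mu := (@lebesgue_measure R).

(* W^{2,2}(R/Z,R) for a scalar 1-periodic function: C^1 with absolutely
   continuous derivative whose a.e. derivative is in L^2(0,1). *)
Definition W22_scalar (c : R -> R) :=
  periodic1 c /\
  exists c1 c2 : R -> R,
    periodic1 c1 /\
    mu.-integrable `[0%R, 1%R] (EFin \o c2) /\
    (\int[mu]_(x in `[0%R, 1%R]) ((c2 x) ^+ 2)%:E < +oo)%E /\
    (forall x, 0 <= x <= 1 -> c1 x = c1 0 + Rintegral mu `[0%R, x] c2) /\
    (forall x, 0 <= x <= 1 -> c x = c 0 + Rintegral mu `[0%R, x] c1).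

Definition W22 (g : curve) := forall i : 'I_3, W22_scalar (fun x => g x ord0 i).

Definition W22norm (h : curve) : R :=
  Num.sqrt (fine (\int[mu]_(x in `[0%R, 1%R])
    ((enorm (h x)) ^+ 2 + (enorm (d1 h x)) ^+ 2 + (enorm (d2 h x)) ^+ 2)%:E)).

Definition is_frechet (F : curve -> R) (G : curve) (dF : curve -> R) :=
  (forall h1 h2, W22 h1 -> W22 h2 -> dF (fun x => h1 x + h2 x) = dF h1 + dF h2) /\
  (forall (a : R) h, W22 h -> dF (fun x => a *: h x) = a * dF h) /\
  (exists C : R, forall h, W22 h -> `|dF h| <= C * W22norm h) /\
  (forall eps : R, 0 < eps -> exists delta : R, 0 < delta /\
     forall h, W22 h -> W22norm h < delta ->
       `|F (fun x => G x + h x) - F G - dF h| <= eps * W22norm h).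

Definition Len (g : curve) : R :=
  fine (\int[mu]_(x in `[0%R, 1%R]) (enorm (d1 g x))%:E).

(* kappa^2 |g'| : |g' x g''|^2 / |g'|^6 * |g'| *)
Definition kappa2_ds (g : curve) (x : R) : R :=
  ((enorm (d1 g x)) ^+ 2 * (enorm (d2 g x)) ^+ 2 - (dot (d1 g x) (d2 g x)) ^+ 2)
  / (enorm (d1 g x)) ^+ 5.

Definition Bend (g : curve) : R :=
  fine (\int[mu]_(x in `[0%R, 1%R]) (kappa2_ds g x)%:E).

(* 1 / r_tp(g s, g t): r_tp is the radius of the circle through g s, g t
   tangent to g at g s; r_tp = |d|^2 / (2 |d - (d.tau) tau|), d = g t - g s *)
Definition inv_rtp (g : curve) (s t : R) : R :=
  let d := g t - g s in
  let tau := (enorm (d1 g s))^-1 *: d1 g s in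
  let perp := d - dot d tau *: tau in
  if d == 0 then 0 else 2 * enorm perp / (enorm d) ^+ 2.

Definition TP (q : R) (g : curve) : R :=
  fine (\int[mu]_(s in `[0%R, 1%R]) \int[mu]_(t in `[0%R, 1%R])
          ((inv_rtp g s t) `^ q * enorm (d1 g s) * enorm (d1 g t))%:E).

Definition Etheta (th q : R) (g : curve) : R :=
  Bend g + th * (TP q g) `^ (1 / (q - 2)).

Definition Stheta (th q : R) (g : curve) : R := Len g * Etheta th q g.

Definition closed_injective (g : curve) :=
  periodic1 g /\ forall s t, 0 <= s < 1 -> 0 <= t < 1 -> g s = g t -> s = t.
Definition arclength (g : curve) := forall x, enorm (d1 g x) = 1.

(* knot type: g1 has the knot type of g0 if it is obtained from g0 by an
   ambient isotopy, up to orientation-preserving reparametrization *)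
Definition ambient_isotopic (g0 g1 : curve) :=
  exists (H Hinv : R -> vec -> vec) (phi : R -> R),
    continuous (fun p : R * vec => H p.1 p.2) /\
    continuous (fun p : R * vec => Hinv p.1 p.2) /\
    (forall t y, H t (Hinv t y) = y /\ Hinv t (H t y) = y) /\
    (forall y, H 0 y = y) /\
    continuous phi /\ (forall x y, x < y -> phi x < phi y) /\
    (forall x, phi (x + 1) = phi x + 1) /\
    (forall x, H 1 (g0 x) = g1 (phi x)).

(* C(K) for the knot class K represented by the embedded curve K0 *)
Definition in_knot_class (K0 g : curve) :=
  W22 g /\ Len g = 1 /\ (forall x, d1 g x != 0) /\ closed_injective g /\
  ambient_isotopic K0 g.

End Defs.

From HB Require Import structures.
From mathcomp Require Import all_boot all_order all_algebra.
From mathcomp Require Import all_classical all_reals all_analysis.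
From mathcomp Require Import ring lra.
Set Implicit Arguments. Unset Strict Implicit. Unset Printing Implicit Defensive.
Import Order.TTheory GRing.Theory Num.Theory.
Import numFieldNormedType.Exports.
Local Open Scope classical_set_scope.
Local Open Scope ring_scope.

(* Length is positively homogeneous of degree 1 and E_theta of degree -1: under
   g |-> c g (c > 0) the bending energy scales by c^-1 and TP_q by c^(2-q), so
   TP_q^(1/(q-2)) scales by c^-1.  Euler's relation for homogeneous functionals
   gives DL(G)[G] = L(G) = 1 and DE_theta(G)[G] = -E_theta(G), so testing the
   Lagrange equation on the radial direction h = G forces mu = E_theta(G).  For
   S_theta = L * E_theta the product rule and L(G) = 1 give
   DS_theta(G)h = DE_theta(G)h + E_theta(G) DL(G)h.  Both facts only use that a
   Frechet derivative dF h is the limit of the chord slopes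
   (F(G + t h) - F(G)) / t as t -> 0+, which determines it uniquely. *)

(* The integrands below are built from [derive1] of arbitrary curves and are not
   known to be measurable, so the library's [integralZl] does not apply; positive
   homogeneity is proved from the definition of the integral as a supremum over
   simple functions. *)
Section integralZl_gt0.
Local Open Scope ereal_scope.
Context d (T : measurableType d) (R : realType) (mu : {measure set T -> \bar R}).
Import HBNNSimple.

Lemma gt0_muleBr (k : R) (a b : \bar R) : (0 < k)%R ->
  k%:E * (a - b) = k%:E * a - k%:E * b.
Proof.
move=> k0; have kyy : k%:E * +oo = +oo by rewrite gt0_muley ?lte_fin.
have kNyy : k%:E * -oo = -oo by rewrite gt0_muleNy ?lte_fin.
by case: a b => [a| |] [b| |] //=; rewrite ?kyy ?kNyy -?EFinM ?mulrBr.
Qed.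

Lemma ge0_integralZl_gt0 (k : R) D (f : T -> \bar R) : (0 < k)%R ->
  (forall x, D x -> 0 <= f x) ->
  \int[mu]_(x in D) (k%:E * f x) = k%:E * \int[mu]_(x in D) f x.
Proof.
move=> k0 f0; have kf0 x : D x -> 0 <= k%:E * f x.
  by move/f0; apply: mule_ge0; rewrite lee_fin ltW.
rewrite (ge0_integralE _ kf0) (ge0_integralE _ f0).
rewrite erestrict_scale -ereal_supZl ?ltW //; last first.
  by apply/set0P; exists (sintegral mu nnsfun0), nnsfun0 => // x; exact: erestrict_ge0.
have k'0 : (0 <= k^-1)%R by rewrite invr_ge0 ltW.
congr ereal_sup; apply/seteqP; split => _ /= [h hle <-].
- exists (sintegral mu (scale_nnsfun h k'0)).
    by exists (scale_nnsfun h k'0) => //= x; rewrite EFinM lee_pdivrMl.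
  rewrite -sintegralrM; congr sintegral; apply/funext => x /=.
  by rewrite mulrA mulfV ?gt_eqF // mul1r.
- case: hle => {}h hle <-; exists (scale_nnsfun h (ltW k0)); last by rewrite -sintegralrM.
  by move=> x /=; rewrite EFinM lee_pmul2l ?lte_fin.
Qed.

Lemma integralZl_gt0 (k : R) D (f : T -> \bar R) : (0 < k)%R ->
  \int[mu]_(x in D) (k%:E * f x) = k%:E * \int[mu]_(x in D) f x.
Proof.
move=> k0; rewrite integralE ge0_funeposM ?ge0_funenegM ?ltW //.
by rewrite !ge0_integralZl_gt0 // -gt0_muleBr // -integralE.
Qed.

Lemma gt0_fineMl (k : R) (x : \bar R) : (0 < k)%R ->
  fine (k%:E * x) = (k * fine x)%R.
Proof.
move=> k0; case: x => [x| |] //=.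
- by rewrite gt0_muley ?lte_fin // mulr0.
- by rewrite gt0_muleNy ?lte_fin // mulr0.
Qed.

Lemma RintegralZl_gt0 (k : R) D (f : T -> R) : (0 < k)%R ->
  Rintegral mu D (fun x => k * f x)%R = (k * Rintegral mu D f)%R.
Proof.
move=> k0; rewrite /Rintegral; under eq_integral do rewrite EFinM.
by rewrite integralZl_gt0 // gt0_fineMl.
Qed.

End integralZl_gt0.

(* [derive1] is a [lim]; when the difference quotients diverge, both sides are
   the default value 0, so no differentiability is needed. *)
Lemma derive1Z (R : realType) n (c : R) (f : R -> 'rV[R]_n) x : c != 0 ->
  derive1 (fun y => c *: f y) x = c *: derive1 f x.
Proof.
move=> c0; rewrite /derive1.
under eq_fun do rewrite -scalerBr scalerA mulrC -scalerA.
have [cvf|dvf] := pselect (cvg ((fun h => h^-1 *: (f (h + x) - f x)) @ 0^')).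
  exact: limZl_tmp.
rewrite [in RHS]dvgP // dvgP; first by apply/rowP => i; rewrite !mxE mulr0.
by move=> cvcf; apply: dvf; rewrite -(is_cvgZlE _ c0).
Qed.

Section Curves.
Variable R : realType.
Local Notation mu := (@lebesgue_measure R).
Implicit Types (g h : curve R) (c : R).

Lemma d1Z c g : c != 0 -> d1 (fun x => c *: g x) = (fun x => c *: d1 g x).
Proof. by move=> c0; apply/funext => x; rewrite /d1 derive1Z. Qed.

Lemma d2Z c g : c != 0 -> d2 (fun x => c *: g x) = (fun x => c *: d2 g x).
Proof. by move=> c0; rewrite /d2 d1Z //; exact: d1Z. Qed.

Lemma dotZl c (u v : vec R) : dot (c *: u) v = c * dot u v.
Proof. by rewrite /dot mulr_sumr; apply: eq_bigr => i _; rewrite mxE mulrA. Qed.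

Lemma dotZr c (u v : vec R) : dot u (c *: v) = c * dot u v.
Proof. by rewrite /dot mulr_sumr; apply: eq_bigr => i _; rewrite mxE mulrCA. Qed.

Lemma enorm_ge0 (u : vec R) : 0 <= enorm u.
Proof. exact: sqrtr_ge0. Qed.

Lemma enormZ c (u : vec R) : 0 <= c -> enorm (c *: u) = c * enorm u.
Proof.
by move=> c0; rewrite /enorm dotZl dotZr mulrA -expr2 sqrtrM ?sqr_ge0 // sqrtr_sqr ger0_norm.
Qed.

Lemma W22_scalarZ c (u : R -> R) :
  0 < c -> W22_scalar u -> W22_scalar (fun x => c * u x).
Proof.
move=> c0 [pu [u1 [u2 [pu1 [intu2 [sq_u2 [u1E uE]]]]]]].
split; first by move=> x; rewrite pu.
exists (fun x => c * u1 x), (fun x => c * u2 x); split; first by move=> x; rewrite pu1.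
split.
  have -> : EFin \o (fun x => c * u2 x) = (fun x => c%:E * (EFin \o u2) x)%E.
    by apply/funext => x; rewrite /= EFinM.
  exact: integrableZl.
split.
  under eq_integral do rewrite exprMn EFinM.
  by rewrite integralZl_gt0 ?exprn_gt0 //; apply: lte_mul_pinfty; rewrite ?lee_fin ?sqr_ge0.
by split=> x x01; rewrite RintegralZl_gt0 // -mulrDr (u1E, uE).
Qed.

Lemma W22Z c h : 0 < c -> W22 h -> W22 (fun x => c *: h x).
Proof.
by move=> c0 hW i; under eq_fun do rewrite mxE; exact: W22_scalarZ.
Qed.

Lemma W22normZ c h : 0 < c -> W22norm (fun x => c *: h x) = c * W22norm h.
Proof.
move=> c0; rewrite /W22norm d2Z ?gt_eqF // d1Z ?gt_eqF //.
under eq_integral do rewrite !enormZ ?ltW // !exprMn -!mulrDr.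
rewrite -/(Rintegral _ _ _) RintegralZl_gt0 ?exprn_gt0 //.
by rewrite sqrtrM ?sqr_ge0 // sqrtr_sqr ger0_norm ?ltW.
Qed.

Lemma Len_arclength g : arclength g -> Len g = 1.
Proof.
move=> garc; rewrite /Len; under eq_integral do rewrite garc.
by rewrite integral_cst //= lebesgue_measure_itv /= lte_fin ltr01 oppr0 adde0 mul1e.
Qed.

Lemma LenZ c g : 0 < c -> Len (fun x => c *: g x) = c * Len g.
Proof.
move=> c0; rewrite /Len d1Z ?gt_eqF //.
under eq_integral do rewrite enormZ ?ltW //.
exact: RintegralZl_gt0.
Qed.

Lemma kappa2_dsZ c g x : 0 < c ->
  kappa2_ds (fun x => c *: g x) x = c^-1 * kappa2_ds g x.
Proof.
move=> c0; rewrite /kappa2_ds d2Z ?gt_eqF // d1Z ?gt_eqF // !enormZ ?ltW // dotZl dotZr.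
move: (enorm (d1 g x)) (enorm (d2 g x)) (dot (d1 g x) (d2 g x)) => a b ab.
have [->|a0] := eqVneq a 0; first by rewrite mulr0 !expr0n /= !invr0 !mulr0.
by field; rewrite a0 gt_eqF.
Qed.

Lemma BendZ c g : 0 < c -> Bend (fun x => c *: g x) = c^-1 * Bend g.
Proof.
move=> c0; rewrite /Bend.
transitivity (Rintegral mu `[0, 1] (fun x => c^-1 * kappa2_ds g x)).
  by congr (fine (integral _ _ _)); apply/funext => x; rewrite kappa2_dsZ.
by apply: RintegralZl_gt0; rewrite invr_gt0.
Qed.

Lemma inv_rtp_ge0 g s t : 0 <= inv_rtp g s t.
Proof.
rewrite /inv_rtp; case: ifP => _ //.
by rewrite divr_ge0 ?mulr_ge0 ?exprn_ge0 ?enorm_ge0.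
Qed.

Lemma inv_rtpZ c g s t : 0 < c ->
  inv_rtp (fun x => c *: g x) s t = c^-1 * inv_rtp g s t.
Proof.
move=> c0; have c0' : c != 0 by rewrite gt_eqF.
have tangentZ (v : vec R) : (enorm (c *: v))^-1 *: (c *: v) = (enorm v)^-1 *: v.
  by rewrite enormZ ?ltW // scalerA invfM mulrAC mulVf // mul1r.
rewrite /inv_rtp d1Z // -scalerBr tangentZ dotZl -scalerA -scalerBr.
rewrite scaler_eq0 (negbTE c0') /=.
case: ifP => _; first by rewrite mulr0.
rewrite !enormZ ?ltW // exprMn invfM.
by move: (enorm (g t - g s) ^+ 2)^-1 => E; field.
Qed.

Lemma TP_ge0 q g : 0 <= TP q g.
Proof.
rewrite /TP fine_ge0 // integral_ge0 // => s _; rewrite integral_ge0 // => t _.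
by rewrite lee_fin !mulr_ge0 ?powR_ge0 ?enorm_ge0.
Qed.

Lemma TPZ q c g : 0 < c -> TP q (fun x => c *: g x) = c `^ (2 - q) * TP q g.
Proof.
move=> c0; have c0' : c != 0 by rewrite gt_eqF.
have -> : c `^ (2 - q) = c^-1 `^ q * (c * c).
  rewrite -powR_inv1 ?(ltW c0) // -powRrM mulN1r -expr2 -powR_mulrn ?(ltW c0) //.
  by rewrite -powRD ?c0' ?implybT // addrC.
have cq0 : 0 < c^-1 `^ q * (c * c) by rewrite !mulr_gt0 ?powR_gt0 ?invr_gt0.
have integrandZ s t : (inv_rtp (fun x => c *: g x) s t `^ q
      * enorm (d1 (fun x => c *: g x) s) * enorm (d1 (fun x => c *: g x) t))%:E
    = ((c^-1 `^ q * (c * c))%:E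
       * (inv_rtp g s t `^ q * enorm (d1 g s) * enorm (d1 g t))%:E)%E.
  rewrite d1Z // !enormZ ?ltW // inv_rtpZ // powRM ?inv_rtp_ge0 ?invr_ge0 ?(ltW c0) //.
  rewrite -EFinM; congr EFin.
  by move: (c^-1 `^ q) (inv_rtp g s t `^ q) (enorm (d1 g s)) (enorm (d1 g t)) => A B a b; ring.
rewrite /TP -(gt0_fineMl _ cq0) -integralZl_gt0 //.
congr (fine (integral _ _ _)); apply/funext => s.
rewrite -integralZl_gt0 //.
by congr (integral _ _ _); apply/funext => t; exact: integrandZ.
Qed.

Lemma EthetaZ th q c g : 2 < q -> 0 < c ->
  Etheta th q (fun x => c *: g x) = c^-1 * Etheta th q g.
Proof.
move=> q2 c0; rewrite /Etheta BendZ // TPZ // powRM ?powR_ge0 ?TP_ge0 // -powRrM.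
have -> : (2 - q) * (1 / (q - 2)) = -1 by field; rewrite subr_eq0 gt_eqF.
by rewrite powR_inv1 ?ltW // mulrDr mulrCA.
Qed.

End Curves.

Section ChordSlope.
Variable R : realType.
Implicit Types (f g : R -> R) (a b : R).

Definition chord_slope f t : R := t^-1 * (f t - f 0).

Lemma chord_slope_right_cont f a :
  chord_slope f @ 0^'+ --> a -> f t @[t --> (0 : R)^'+] --> f 0.
Proof.
move=> fa; apply: (@cvg_trans _ ((fun t => f 0 + t * chord_slope f t) @ 0^'+)).
  apply: near_eq_cvg; near=> t.
  have t0 : t != 0 by rewrite gt_eqF //; near: t; exact: nbhs_right_gt.
  by rewrite /chord_slope mulrA mulfV // mul1r addrC subrK.
have id0 : t @[t --> (0 : R)^'+] --> 0 by apply: cvg_at_right_filter; exact: cvg_id.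
have : f 0 + t * chord_slope f t @[t --> (0 : R)^'+] --> f 0 + 0 * a.
  by apply: cvgD; [exact: cvg_cst | exact: cvgM].
by rewrite mul0r addr0.
Unshelve. all: by end_near. Qed.

Lemma chord_slopeM f g a b : chord_slope f @ 0^'+ --> a -> chord_slope g @ 0^'+ --> b ->
  chord_slope (f \* g) @ 0^'+ --> f 0 * b + g 0 * a.
Proof.
move=> fa gb.
have -> : chord_slope (f \* g) = (fun t => f t * chord_slope g t + g 0 * chord_slope f t).
  by apply/funext => t; rewrite /chord_slope /=; ring.
apply: cvgD; apply: cvgM => //; [exact: chord_slope_right_cont fa | exact: cvg_cst].
Qed.

Lemma cvg_dnbhs_at_right (T : topologicalType) (f : R -> T) (x : R) (l : T) :
  f @ x^' --> l -> f @ x^'+ --> l.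
Proof.
move=> fl; apply: cvg_trans fl; apply: cvg_app => A.
rewrite !nbhs_filterE /dnbhs /at_right /within /=; apply: filterS => y Ay xy.
by apply: Ay; rewrite gt_eqF.
Qed.

Lemma is_derive_chord_slope f (x df : R) : is_derive x 1 f df ->
  chord_slope (fun t => f (x + t)) @ 0^'+ --> df.
Proof.
move=> [fx <-]; apply: cvg_dnbhs_at_right.
have -> : chord_slope (fun t => f (x + t)) = (fun h => h^-1 *: ((f \o shift x) (h *: 1) - f x)).
  apply/funext => h; rewrite /chord_slope /= addr0 [x + h]addrC.
  by congr (_ * (f _ - _)); rewrite -[RHS]/(h * 1 + x) mulr1.
exact: fx.
Qed.

Lemma chord_slope_powR a : chord_slope (fun t => (1 + t) `^ a) @ 0^'+ --> a.
Proof.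
have := is_derive_chord_slope (is_derive1_powR a (@ltr01 R)).
by rewrite powR1 mulr1.
Qed.

End ChordSlope.

Section Frechet.
Variable R : realType.
Implicit Types (F : curve R -> R) (G h : curve R) (dF : curve R -> R).

Lemma is_frechet_chord_slope F G dF h : is_frechet F G dF -> W22 h ->
  chord_slope (fun t => F (fun x => G x + t *: h x)) @ 0^'+ --> dF h.
Proof.
move=> [_ [dFZ [_ dF_small]]] hW; apply/cvgrPdist_le => eps eps0.
have N0 : 0 <= W22norm h by exact: sqrtr_ge0.
set N := W22norm h in N0 *.
have N1 : 0 < N + 1 by lra.
have [delta [delta0 small]] := dF_small (eps / (N + 1)) (divr_gt0 eps0 N1).
near=> t.
have t0 : 0 < t by near: t; exact: nbhs_right_gt.
have tN : t * N < delta.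
  apply: (le_lt_trans (y := t * (N + 1))); first by rewrite ler_wpM2l ?(ltW t0) ?lerDl.
  by rewrite -ltr_pdivlMr //; near: t; apply: nbhs_right_lt; rewrite divr_gt0.
have G0 : (fun x => G x + 0 *: h x) = G by apply/funext => x; rewrite scale0r addr0.
have := small _ (W22Z t0 hW); rewrite W22normZ // dFZ // => /(_ tN).
rewrite /chord_slope G0 -/N.
move: (F (fun x => G x + t *: h x)) (F G) => Ft F0 le_eps.
have -> : dF h - t^-1 * (Ft - F0) = - (t^-1 * (Ft - F0 - t * dF h)) by field; rewrite gt_eqF.
rewrite normrN normrM gtr0_norm ?invr_gt0 // -(ler_pM2l t0) mulVKf ?gt_eqF //.
apply: le_trans le_eps _.
have -> : eps / (N + 1) * (t * N) = t * eps * (N / (N + 1)) by ring.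
by rewrite ler_piMr ?mulr_ge0 ?divr_ge0 ?(ltW t0) ?(ltW eps0) // ler_pdivrMr // mul1r lerDl.
Unshelve. all: by end_near. Qed.

Lemma is_frechetM_eq F1 F2 G dF1 dF2 dF h :
  is_frechet F1 G dF1 -> is_frechet F2 G dF2 -> is_frechet (fun g => F1 g * F2 g) G dF ->
  W22 h -> dF h = F1 G * dF2 h + F2 G * dF1 h.
Proof.
move=> F1_dF1 F2_dF2 F12_dF hW.
apply: (@cvg_unique _ (@Rhausdorff R) _ _ _ _ (is_frechet_chord_slope F12_dF hW)).
have G0 : (fun x => G x + 0 *: h x) = G by apply/funext => x; rewrite scale0r addr0.
have := chord_slopeM (is_frechet_chord_slope F1_dF1 hW) (is_frechet_chord_slope F2_dF2 hW).
by rewrite /= G0.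
Qed.

Lemma is_frechet_homogeneous F G dF (a : R) : is_frechet F G dF -> W22 G ->
  (forall c, 0 < c -> F (fun x => c *: G x) = c `^ a * F G) -> dF G = a * F G.
Proof.
move=> F_dF GW homF.
apply: (@cvg_unique _ (@Rhausdorff R) _ _ _ _ (is_frechet_chord_slope F_dF GW)).
rewrite mulrC.
apply: (@cvg_trans _ (F G * chord_slope (fun t => (1 + t) `^ a) t @[t --> 0^'+])).
  apply: near_eq_cvg; near=> t.
  have t0 : 0 < t by near: t; exact: nbhs_right_gt.
  have radial s : (fun x => G x + s *: G x) = (fun x => (1 + s) *: G x).
    by apply/funext => x; rewrite scalerDl scale1r.
  rewrite /chord_slope !radial !homF ?addr0 ?powR1 ?mul1r //; last by rewrite ltr_pwDr.
  by move: ((1 + t) `^ a) => p; ring.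
by apply: cvgM; [exact: cvg_cst | exact: chord_slope_powR].
Unshelve. all: by end_near. Qed.

End Frechet.

Theorem corollary4p3 (R : realType) (q th : R) (hq : 2 < q <= 4) (hth : 0 < th)
  (G : curve R) (hW : W22 G) (hinj : closed_injective G) (harc : arclength G)
  (dE dL : curve R -> R)
  (hdE : is_frechet (Etheta th q) G dE) (hdL : is_frechet (@Len R) G dL) :
  (is_frechet (Stheta th q) G (fun _ => 0) ->
     forall h, W22 h -> dE h + Etheta th q G * dL h = 0) /\
  (forall K0 : curve R, in_knot_class K0 G ->
     (exists mu : R, forall h, W22 h -> dE h + mu * dL h = 0) ->
     forall h, W22 h -> dE h + Etheta th q G * dL h = 0).
Proof.
have q2 : 2 < q by case/andP: hq.
have LG : Len G = 1 := Len_arclength harc.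
split=> [hdS h hW_h | K0 _ [m multiplier] h hW_h].
  by have /esym := is_frechetM_eq hdL hdE hdS hW_h; rewrite LG mul1r.
have dLG : dL G = 1.
  have homL c : 0 < c -> Len (fun x => c *: G x) = c `^ 1 * Len G.
    by move=> c0; rewrite LenZ // powRr1 // ltW.
  by rewrite (is_frechet_homogeneous hdL hW homL) LG mulr1.
have dEG : dE G = - Etheta th q G.
  have homE c : 0 < c -> Etheta th q (fun x => c *: G x) = c `^ (-1) * Etheta th q G.
    by move=> c0; rewrite EthetaZ // powR_inv1 // ltW.
  by rewrite (is_frechet_homogeneous hdE hW homE) mulN1r.
have := multiplier G hW; rewrite dLG dEG mulr1 addrC => /subr0_eq <-.
exact: multiplier.
Qed.
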